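(* Let $I\subset S$ be a saturated Borel ideal, $\preceq$ any term order on the terms of $S$, and $p>q$ integers. If $I\cap\mathbb T_p$ is a segment with respect to $\preceq$, then $I\cap\mathbb T_q$ is a segment with respect to $\preceq$.
   Context: $S=K[x_0,\dots,x_n]$, $K$ algebraically closed of characteristic $0$, standard grading, $x_0<x_1<\dots<x_n$; $\mathbb T_t$ denotes the set of monomials (terms) of degree $t$. A monomial ideal is Borel if for every $t$, whenever $x^\alpha\in I\cap \mathbb T_t$ with $\alpha_j>0$ and $j<n$, also $x^\alpha x_{j+1}/x_j\in I$ (equivalently, $I\cap\mathbb T_t$ is closed under all such moves). Given a term order $\preceq$, a set $B\subseteq\mathbb T_t$ is a segment if whenever $\tau\in B$ and $\tau'\in\mathbb T_t$ with $\tau'\succ\tau$, then $\tau'\in B$. An ideal $I$ is saturated if $I=\bigcup_{h\ge0}(I:\mathfrak m^h)$ with $\mathfrak m=(x_0,\dots,x_n)$. *)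

(* Monomials of S = K[x_0,...,x_n] are exponent vectors. *)
From mathcomp Require Import all_boot.
Set Implicit Arguments. Unset Strict Implicit. Unset Printing Implicit Defensive.

Definition mon (n : nat) := {ffun 'I_n.+1 -> nat}.

Definition mdeg n (a : mon n) : nat := \sum_(i < n.+1) a i.
Definition mmul n (a b : mon n) : mon n := [ffun i => a i + b i].
Definition mone n : mon n := [ffun => 0%N].

(* the move x^alpha |-> x^alpha * x_{j+1} / x_j, for j < n
   (here j : 'I_n; widen_ord j has value j, lift ord0 j has value j+1) *)
Definition bmove n (a : mon n) (j : 'I_n) : mon n :=
  [ffun i => if i == widen_ord (leqnSn n) j then (a i).-1
             else if i == lift ord0 j then (a i).+1 else a i].

(* A monomial ideal of S, given by the set of terms it contains
   (a monomial ideal is determined by its terms). *)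
Definition monomial_ideal n (I : mon n -> Prop) : Prop :=
  forall a b, I a -> I (mmul a b).

Definition borel n (I : mon n -> Prop) : Prop :=
  forall (a : mon n) (j : 'I_n), I a -> 0 < a (widen_ord (leqnSn n) j) ->
    I (bmove a j).

(* I = union_h (I : m^h); for a monomial ideal, a term tau lies in (I : m^h)
   iff tau * sigma lies in I for every term sigma of degree h. *)
Definition saturated n (I : mon n -> Prop) : Prop :=
  forall (a : mon n) (h : nat),
    (forall s : mon n, mdeg s = h -> I (mmul a s)) -> I a.

Definition term_order n (le : mon n -> mon n -> Prop) : Prop :=
  (forall a, le a a) /\
  (forall a b, le a b -> le b a -> a = b) /\
  (forall a b c, le a b -> le b c -> le a c) /\
  (forall a b, le a b \/ le b a) /\
  (forall a b c, le a b -> le (mmul a c) (mmul b c)) /\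
  (forall a, le (mone n) a).

Definition strictly_below n (le : mon n -> mon n -> Prop) (a b : mon n) :=
  le a b /\ a <> b.

Definition ideal_deg n (I : mon n -> Prop) (t : nat) : mon n -> Prop :=
  fun a => I a /\ mdeg a = t.

Definition segment n (le : mon n -> mon n -> Prop) (t : nat)
    (B : mon n -> Prop) : Prop :=
  forall tau tau' : mon n, B tau -> mdeg tau' = t ->
    strictly_below le tau tau' -> B tau'.

(* Multiplying by x_0^(p-q) sends I cap T_q into I cap T_p and preserves the
   term order, so a term of degree q above tau in I is mapped to a term of
   degree p in I. It remains to divide x_0^(p-q) back out. Since x_0 is the
   smallest variable, Borel moves turn sigma x_0 in I into sigma x_i in I for
   every i, i.e. sigma in (I : m); saturation then gives sigma in I. *)
From mathcomp Require Import all_boot.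
Set Implicit Arguments. Unset Strict Implicit. Unset Printing Implicit Defensive.

Section Monomials.
Variable n : nat.
Implicit Types (a b c s : mon n) (i : 'I_n.+1).

Definition mvarX i k : mon n := [ffun l => if l == i then k else 0].
Definition mvar i : mon n := mvarX i 1.

Lemma mmulA : associative (@mmul n).
Proof. by move=> a b c; apply/ffunP => i; rewrite !ffunE addnA. Qed.

Lemma mmulm1 : right_id (mone n) (@mmul n).
Proof. by move=> a; apply/ffunP => i; rewrite !ffunE addn0. Qed.

Lemma mmulIm c : injective (fun a => mmul a c).
Proof. by move=> a b /ffunP e; apply/ffunP => i; move: (e i); rewrite !ffunE => /addIn. Qed.

Lemma mvarX0 i : mvarX i 0 = mone n.
Proof. by apply/ffunP => l; rewrite !ffunE if_same. Qed.

Lemma mvarXS i k : mvarX i k.+1 = mmul (mvarX i k) (mvar i).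
Proof. by apply/ffunP => l; rewrite !ffunE; case: (l == i); rewrite ?addn1. Qed.

Lemma mdeg_mmul a b : mdeg (mmul a b) = mdeg a + mdeg b.
Proof. by rewrite /mdeg -big_split; apply: eq_bigr => i _; rewrite ffunE. Qed.

Lemma mdeg_mvarX i k : mdeg (mvarX i k) = k.
Proof.
rewrite /mdeg (bigD1 i) //= ffunE eqxx big1 ?addn0 // => l.
by rewrite ffunE => /negbTE ->.
Qed.

Lemma mdeg_eq1 s : mdeg s = 1 -> exists i, s = mvar i.
Proof.
move=> s1; have [i si] : exists i, 0 < s i.
  apply/existsP; apply: contraT; rewrite negb_exists => /forallP s0.
  by move: s1; rewrite /mdeg big1 // => i _; move: (s0 i); rewrite lt0n negbK => /eqP.
exists i; move: s1; rewrite /mdeg (bigD1 i) //=.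
case si1: (s i) si => [|[|k]] //= _ [/eqP]; rewrite sum_nat_eq0 => /forallP s0.
apply/ffunP => l; rewrite !ffunE; case: eqP => [-> //|/eqP li].
by apply/eqP; move: (s0 l); rewrite li.
Qed.

Lemma bmove_mvar a (j : 'I_n) :
  bmove (mmul a (mvar (widen_ord (leqnSn n) j))) j = mmul a (mvar (lift ord0 j)).
Proof.
have ne : widen_ord (leqnSn n) j != lift ord0 j.
  by rewrite -val_eqE /= /bump leq0n add1n neq_ltn ltnSn.
apply/ffunP => l; rewrite !ffunE.
case: eqP => [->|_]; first by rewrite (negbTE ne) addn1 addn0.
by case: eqP; rewrite ?addn0 ?addn1.
Qed.

End Monomials.

Section SaturatedBorel.
Variables (n : nat) (I : mon n -> Prop).
Hypotheses (borelI : borel I) (satI : saturated I).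

Lemma borel_mvar0 a : I (mmul a (mvar ord0)) -> forall i, I (mmul a (mvar i)).
Proof.
move=> Ia0 [k]; elim: k => [|k IHk] kn.
  by congr (I (mmul _ (mvar _))): Ia0; apply/val_inj.
have kn' : k < n by [].
have Iak : I (mmul a (mvar (widen_ord (leqnSn n) (Ordinal kn')))).
  by congr (I (mmul _ (mvar _))): (IHk (ltnW kn)); apply/val_inj.
have := borelI (j := Ordinal kn') Iak; rewrite bmove_mvar !ffunE eqxx addn1 => /(_ isT).
by congr (I (mmul _ (mvar _))); apply/val_inj.
Qed.

Lemma saturated_borel_mvar0 a : I (mmul a (mvar ord0)) -> I a.
Proof.
move=> Ia0; apply: (satI (h := 1)) => s /mdeg_eq1 [i ->].
exact: borel_mvar0.
Qed.

Lemma saturated_borel_mvarX0 k a : I (mmul a (mvarX ord0 k)) -> I a.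
Proof.
elim: k a => [|k IHk] a; first by rewrite mvarX0 mmulm1.
by rewrite mvarXS mmulA => /saturated_borel_mvar0 /IHk.
Qed.

End SaturatedBorel.

Theorem mainTheorem2 (n : nat) (I : mon n -> Prop)
    (le : mon n -> mon n -> Prop) (p q : nat) :
  monomial_ideal I -> borel I -> saturated I -> term_order le ->
  q < p ->
  segment le p (ideal_deg I p) ->
  segment le q (ideal_deg I q).
Proof.
move=> idealI borelI satI [_ [_ [_ [_ [le_mmul _]]]]] qp segp tau tau'
  [Itau deg_tau] deg_tau' [le_tau neq_tau].
split=> //.
pose x0pq := mvarX (@ord0 n) (p - q).
have deg_mul_x0pq t : mdeg t = q -> mdeg (mmul t x0pq) = p.
  by move=> dt; rewrite mdeg_mmul mdeg_mvarX dt subnKC // ltnW.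
have [Itau'x0 _] : ideal_deg I p (mmul tau' x0pq).
  apply: (segp (mmul tau x0pq)); [split; auto | exact: deg_mul_x0pq |].
  by split; [apply: le_mmul | move/mmulIm].
exact: saturated_borel_mvarX0 Itau'x0.
Qed.
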